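(* Let $\mathbf{A}\in\mathbb{R}^{m_1\times n}$ ($m_1\ge1$), $\mathbf{b}\in\mathbb{R}^{m_1}$, $\mathbf{W}\in\mathbb{R}^{m_2\times n}$, $\mathbf{q}\in\mathbb{R}^{m_2}$, observations $\mathbf{x}^1,\dots,\mathbf{x}^K\in\mathbb{R}^n$ and a constant $M>0$. For an integer $p$ let $\mathbf{IL}(p)$ be the mixed-integer problem in variables $\mathbf{v}\in\{0,1\}^{m_1}$, $\mathbf{z}\in\mathbb{R}^n$, $\mathbf{E}=[\epsilon^1,\dots,\epsilon^K]$: $$\min\ \mathscr{D}(\mathbf{E},\mathbf{A})\ \text{ s.t. }\ \mathbf{b}\le\mathbf{A}\mathbf{z}\le\mathbf{b}+M(\mathbf{1}-\mathbf{v}),\ \mathbf{W}\mathbf{z}\ge\mathbf{q},\ \mathbf{z}=\mathbf{x}^k-\epsilon^k\ \forall k,\ \textstyle\sum_{j=1}^{m_1}v_j=p.$$ If $\mathbf{IL}(p_1)$ and $\mathbf{IL}(p_2)$ are feasible for $p_1,p_2\in\{1,\dots,m_1\}$ with $p_1\le p_2$, and $\mathscr{D}^*_{p_1},\mathscr{D}^*_{p_2}$ denote their optimal objective values, then $\mathscr{D}^*_{p_1}\le\mathscr{D}^*_{p_2}$.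
   Context: Rows of $\mathbf{A}\mathbf{x}\ge\mathbf{b}$ are the relevant constraints; $\mathscr{D}\ge0$ is a user-chosen nonnegative distance measure on $\mathbf{E}$ and $\mathbf{A}$. $M$ is a big-M constant, taken sufficiently large that upper bounds $\mathbf{a}_j\mathbf{z}\le b_j+M$ are not restrictive on the feasible region $\{\mathbf{x}:\mathbf{A}\mathbf{x}\ge\mathbf{b},\mathbf{W}\mathbf{x}\ge\mathbf{q}\}$. *)

From HB Require Import structures.
From mathcomp Require Import all_boot all_order all_algebra.
From mathcomp Require Import classical_sets reals.
Set Implicit Arguments. Unset Strict Implicit. Unset Printing Implicit Defensive.
Import Order.TTheory GRing.Theory Num.Theory.
Local Open Scope ring_scope.

Definition IL_feasible (R : realType) (m1 m2 n K : nat)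
  (A : 'M[R]_(m1, n)) (b : 'cV[R]_m1) (W : 'M[R]_(m2, n)) (q : 'cV[R]_m2)
  (X : 'M[R]_(n, K)) (M : R) (p : nat)
  (v : 'I_m1 -> bool) (z : 'cV[R]_n) (E : 'M[R]_(n, K)) : Prop :=
  [/\ (forall j : 'I_m1, b j 0 <= (A *m z) j 0),
      (forall j : 'I_m1, (A *m z) j 0 <= b j 0 + M * (1 - (v j)%:R)),
      (forall i : 'I_m2, q i 0 <= (W *m z) i 0),
      (forall k : 'I_K, z = col k X - col k E) &
      (\sum_(j < m1) (v j : nat))%N = p].

Definition IL_values (R : realType) (m1 m2 n K : nat)
  (D : 'M[R]_(n, K) -> 'M[R]_(m1, n) -> R)
  (A : 'M[R]_(m1, n)) (b : 'cV[R]_m1) (W : 'M[R]_(m2, n)) (q : 'cV[R]_m2)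
  (X : 'M[R]_(n, K)) (M : R) (p : nat) : set R :=
  [set d | exists v z E, IL_feasible A b W q X M p v z E /\ d = D E A].

Definition IL_feasible_problem (R : realType) (m1 m2 n K : nat)
  (A : 'M[R]_(m1, n)) (b : 'cV[R]_m1) (W : 'M[R]_(m2, n)) (q : 'cV[R]_m2)
  (X : 'M[R]_(n, K)) (M : R) (p : nat) : Prop :=
  exists v z E, IL_feasible A b W q X M p v z E.

(* Optimal objective value of IL(p): the infimum of the feasible objective values
   (a minimum whenever the optimum is attained). *)
Definition IL_opt (R : realType) (m1 m2 n K : nat)
  (D : 'M[R]_(n, K) -> 'M[R]_(m1, n) -> R)
  (A : 'M[R]_(m1, n)) (b : 'cV[R]_m1) (W : 'M[R]_(m2, n)) (q : 'cV[R]_m2)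
  (X : 'M[R]_(n, K)) (M : R) (p : nat) : R :=
  inf (IL_values D A b W q X M p).

From HB Require Import structures.
From mathcomp Require Import all_boot all_order all_algebra.
From mathcomp Require Import classical_sets reals.

Set Implicit Arguments.
Unset Strict Implicit.
Unset Printing Implicit Defensive.

Import Order.TTheory GRing.Theory Num.Theory.
Local Open Scope ring_scope.

(* Switching off some of the active constraints of a feasible point of IL(p2)
   keeps it feasible, because the big-M upper bound is implied by the other
   constraints.  Hence every value attained in IL(p2) is attained in IL(p1),
   and the infimum over the larger set of values is the smaller one. *)

Lemma sum_nat_bool_card (T : finType) (v : T -> bool) :
  (\sum_i (v i : nat))%N = #|[set i | v i]|.
Proof.
rewrite -sum1dep_card [RHS]big_mkcond /=.
by apply: eq_bigr => i _; case: (v i).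
Qed.

Lemma exists_subset_card (T : finType) (S : {set T}) (k : nat) :
  (k <= #|S|)%N -> exists2 S' : {set T}, S' \subset S & #|S'| = k.
Proof.
move=> le_kS; exists [set x in take k (enum S)].
  by apply/fintype.subsetP => x; rewrite inE => /mem_take; rewrite mem_enum.
by rewrite cardsE (card_uniqP _) ?take_uniq ?enum_uniq // size_takel -?cardE.
Qed.

Lemma exists_sub_bool_sum (T : finType) (v : T -> bool) (k : nat) :
  (k <= \sum_i (v i : nat))%N ->
  exists2 w : T -> bool, (forall i, w i -> v i) & (\sum_i (w i : nat))%N = k.
Proof.
rewrite sum_nat_bool_card => /exists_subset_card[S' /fintype.subsetP sub_S' card_S'].
exists (mem S') => [i /sub_S'|]; first by rewrite inE.
by rewrite sum_nat_bool_card -card_S'; apply: eq_card => i; rewrite inE.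
Qed.

Lemma subset_inf_le (R : realType) (E F : set R) :
  (E `<=` F)%classic -> nonempty E -> has_lbound F -> inf F <= inf E.
Proof.
move=> sub_EF E_n0 F_lb; apply: lb_le_inf => // x /sub_EF.
exact: ge_inf.
Qed.

Section FewerActiveConstraints.

Variables (R : realType) (m1 m2 n K : nat).
Variables (A : 'M[R]_(m1, n)) (b : 'cV[R]_m1) (W : 'M[R]_(m2, n)).
Variables (q : 'cV[R]_m2) (X : 'M[R]_(n, K)) (M : R).

Hypothesis bigM_slack : forall x : 'cV[R]_n,
  (forall j : 'I_m1, b j 0 <= (A *m x) j 0) ->
  (forall i : 'I_m2, q i 0 <= (W *m x) i 0) ->
  forall j : 'I_m1, (A *m x) j 0 <= b j 0 + M.

Lemma IL_feasible_fewer_active (p1 p2 : nat) v z E :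
  (p1 <= p2)%N -> IL_feasible A b W q X M p2 v z E ->
  exists w, IL_feasible A b W q X M p1 w z E.
Proof.
move=> le_p12 [Az_ge Az_le Wz_ge z_eq sum_v].
have [w w_sub sum_w] : exists2 w : 'I_m1 -> bool,
    (forall j, w j -> v j) & (\sum_j (w j : nat))%N = p1.
  by apply: exists_sub_bool_sum; rewrite sum_v.
exists w; split=> // j; case w_j: (w j).
  by have := Az_le j; rewrite (w_sub j w_j).
by rewrite subr0 mulr1; apply: bigM_slack.
Qed.

Lemma IL_values_fewer_active (D : 'M[R]_(n, K) -> 'M[R]_(m1, n) -> R)
    (p1 p2 : nat) :
  (p1 <= p2)%N ->
  (IL_values D A b W q X M p2 `<=` IL_values D A b W q X M p1)%classic.
Proof.
move=> le_p12 _ [v [z [E [feas ->]]]].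
have [w feas_w] := IL_feasible_fewer_active le_p12 feas.
by exists w, z, E.
Qed.

End FewerActiveConstraints.

Theorem proposition5 (R : realType) (m1 m2 n K : nat)
  (A : 'M[R]_(m1, n)) (b : 'cV[R]_m1) (W : 'M[R]_(m2, n)) (q : 'cV[R]_m2)
  (X : 'M[R]_(n, K)) (M : R)
  (D : 'M[R]_(n, K) -> 'M[R]_(m1, n) -> R)
  (p1 p2 : nat) :
  (0 < m1)%N ->
  0 < M ->
  (forall E A', 0 <= D E A') ->
  (* big-M is not restrictive on {x : A x >= b, W x >= q} *)
  (forall x : 'cV[R]_n,
      (forall j : 'I_m1, b j 0 <= (A *m x) j 0) ->
      (forall i : 'I_m2, q i 0 <= (W *m x) i 0) ->
      forall j : 'I_m1, (A *m x) j 0 <= b j 0 + M) ->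
  (1 <= p1)%N -> (p1 <= p2)%N -> (p2 <= m1)%N ->
  IL_feasible_problem A b W q X M p1 ->
  IL_feasible_problem A b W q X M p2 ->
  IL_opt D A b W q X M p1 <= IL_opt D A b W q X M p2.
Proof.
move=> _ _ D_ge0 bigM_slack _ le_p12 _ _ [v2 [z2 [E2 feas2]]].
apply: subset_inf_le.
- exact: IL_values_fewer_active.
- by exists (D E2 A), v2, z2, E2.
- by exists 0 => _ [v [z [E [_ ->]]]].
Qed.
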